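(* Let $\Sigma$ be a finite alphabet. There is a family of linear-time properties $(\varphi_n)_{n\in\mathbb{N}}$ over $\Sigma$ such that, for every $n$, every (nondeterministic) parity automaton $\mathcal{A}$ over $\Sigma$ that is $n$-lasso-precise for $\varphi_n$ (i.e., $L(\mathcal{A})\subseteq\varphi_n$ and $L_n(L(\mathcal{A}))=L_n(\varphi_n)$) has at least $|\Sigma|^n$ states.
   Context: A linear-time property over $\Sigma$ is a set $\varphi \subseteq \Sigma^\omega$. A lasso of length $n$ is a pair $(u,v)$ with $u\in\Sigma^*$, $v\in\Sigma^+$, $|u\cdot v|=n$, inducing the word $u\cdot v^\omega$. For a property $\psi$, $L_n(\psi)=\{u\cdot v^\omega \in \psi \mid u\in\Sigma^*, v\in\Sigma^+, |u\cdot v|=n\}$. A nondeterministic parity automaton over $\Sigma$ is $\mathcal{A}=(Q,Q_0,\delta,\mu)$ with finite state set $Q$, initial states $Q_0\subseteq Q$, transition function $\delta: Q\times\Sigma\to\mathcal{P}(Q)$, and coloring $\mu: Q\to C$ for a finite $C\subset\mathbb{N}$. A run on $\alpha_1\alpha_2\cdots$ is a sequence $q_0q_1\cdots$ with $q_0\in Q_0$ and $q_{i+1}\in\delta(q_i,\alpha_{i+1})$; it is accepting if the highest color occurring infinitely often in $\mu(q_0)\mu(q_1)\cdots$ is even; $L(\mathcal{A})$ is the set of words having an accepting run. *)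

From mathcomp Require Import all_boot.
Unset Printing Implicit Defensive.

(* Infinite words over Sigma: alpha_1 alpha_2 ... is represented 0-indexed as
   w : nat -> Sigma with w i = alpha_{i+1}.  A linear-time property is a
   predicate on infinite words. *)
Definition word (Sigma : Type) := nat -> Sigma.
Definition property (Sigma : Type) := word Sigma -> Prop.

(* The word u . v^omega, where v = a :: v' (so v is nonempty, v in Sigma^+). *)
Definition lasso_word (Sigma : Type) (u : seq Sigma) (a : Sigma) (v' : seq Sigma)
  : word Sigma :=
  fun i => if i < size u then nth a u i
           else nth a (a :: v') ((i - size u) %% size (a :: v')).

Definition Ln (Sigma : Type) (n : nat) (psi : property Sigma) : property Sigma :=
  fun w => psi w /\
    exists (u : seq Sigma) (a : Sigma) (v' : seq Sigma),
      size u + size (a :: v') = n /\ w = lasso_word Sigma u a v'.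

(* Nondeterministic parity automaton (Q, Q0, delta, mu), Q finite,
   colors in nat (finitely many are used since Q is finite). *)
Record npa (Sigma : Type) := NPA {
  state : finType;
  init : {set state};
  delta : state -> Sigma -> {set state};
  color : state -> nat
}.
Arguments state {Sigma} n.
Arguments init {Sigma} n.
Arguments delta {Sigma} n _ _.
Arguments color {Sigma} n _.

Definition is_run {Sigma : Type} (A : npa Sigma) (w : word Sigma)
  (r : nat -> state A) : Prop :=
  r 0 \in init A /\ forall i, r i.+1 \in delta A (r i) (w i).

Definition inf_often_color {Sigma : Type} (A : npa Sigma) (r : nat -> state A)
  (c : nat) : Prop :=
  forall N, exists i, N <= i /\ color A (r i) = c.

Definition accepting {Sigma : Type} (A : npa Sigma) (r : nat -> state A) : Prop :=
  exists c, inf_often_color A r c /\ ~~ odd c /\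
    forall c', inf_often_color A r c' -> c' <= c.

Definition lang {Sigma : Type} (A : npa Sigma) : property Sigma :=
  fun w => exists r, is_run A w r /\ accepting A r.

Definition lasso_precise (Sigma : Type) (n : nat) (phi : property Sigma)
  (A : npa Sigma) : Prop :=
  (forall w, lang A w -> phi w) /\
  (forall w, Ln Sigma n (lang A) w <-> Ln Sigma n phi w).

(* Take for [phi_n] the words of period [n].  Every [t] in [Sigma^n] gives the
   lasso [t^omega] of length [n], so an [n]-lasso-precise automaton accepts it;
   send [t] to the state reached after [n] letters of some accepting run.  If
   [t1] and [t2] reach the same state, following the run of [t1] for [n] steps
   and then the run of [t2] is an accepting run on [t1 t2^omega], which must
   therefore be [n]-periodic, forcing [t1 = t2].  So [t |-> state] is
   injective on [Sigma^n]. *)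

From Stdlib Require Import ClassicalEpsilon.
From mathcomp Require Import all_boot.

Definition periodic (Sigma : Type) (n : nat) : property Sigma :=
  fun w => forall i, w i = w (i %% n).

Definition splice {T : Type} (k : nat) (f g : nat -> T) : nat -> T :=
  fun i => if i < k then f i else g i.

Lemma splice_lt T k (f g : nat -> T) i : i < k -> splice k f g i = f i.
Proof. by rewrite /splice => ->. Qed.

Lemma splice_ge T k (f g : nat -> T) i : k <= i -> splice k f g i = g i.
Proof. by rewrite /splice ltnNge => ->. Qed.

Section Splicing.
Variables (Sigma : Type) (A : npa Sigma).

Lemma inf_often_color_splice k (r1 r2 : nat -> state A) c :
  inf_often_color A (splice k r1 r2) c <-> inf_often_color A r2 c.
Proof.
split=> inf_c M; have [i [le_i col_i]] := inf_c (maxn M k).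
all: rewrite geq_max in le_i; case/andP: le_i => le_Mi le_ki.
all: by exists i; rewrite ?splice_ge in col_i *.
Qed.

Lemma accepting_splice k (r1 r2 : nat -> state A) :
  accepting A r2 -> accepting A (splice k r1 r2).
Proof.
case=> c [inf_c [even_c max_c]]; exists c.
split; first exact/inf_often_color_splice.
by split=> // c' /inf_often_color_splice; apply: max_c.
Qed.

Lemma is_run_splice k (w1 w2 : word Sigma) r1 r2 :
  is_run A w1 r1 -> is_run A w2 r2 -> r1 k = r2 k ->
  is_run A (splice k w1 w2) (splice k r1 r2).
Proof.
case=> init1 step1 [init2 step2] r12k; split; first by rewrite /splice; case: k r12k.
move=> i; rewrite /splice; case: (ltngtP i.+1 k) => [_ | _ | eq_i1k].
- exact: step1.
- exact: step2.
- by rewrite -eq_i1k in r12k; rewrite -r12k; apply: step1.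
Qed.

Lemma lang_splice k (w1 w2 : word Sigma) r1 r2 :
  is_run A w1 r1 -> is_run A w2 r2 -> accepting A r2 -> r1 k = r2 k ->
  lang A (splice k w1 w2).
Proof.
move=> run1 run2 acc2 r12k; exists (splice k r1 r2).
by split; [apply: is_run_splice | apply: accepting_splice].
Qed.

End Splicing.

Section CycleWords.
Variables (Sigma : finType) (m : nat).
Local Notation n := m.+1.

Definition cycle_word (t : n.-tuple Sigma) : word Sigma :=
  lasso_word Sigma [::] (thead t) (behead t).

Lemma cycle_wordE t i : cycle_word t i = nth (thead t) t (i %% n).
Proof.
have cons_t : thead t :: behead t = t by case: t => [[|a s] ?].
by rewrite /cycle_word /lasso_word /= subn0 cons_t size_tuple.
Qed.

Lemma cycle_word_lasso t : Ln Sigma n (periodic Sigma n) (cycle_word t).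
Proof.
split; first by move=> i; rewrite !cycle_wordE modn_mod.
exists [::], (thead t), (behead t); split=> //.
by rewrite /= size_behead size_tuple.
Qed.

Lemma cycle_word_tnth t (j : 'I_n) : cycle_word t j = tnth t j.
Proof. by rewrite cycle_wordE modn_small // (tnth_nth (thead t)). Qed.

Lemma cycle_word_addn t i : cycle_word t (n + i) = cycle_word t i.
Proof. by rewrite !cycle_wordE modnDl. Qed.

Lemma periodic_splice_cycle_word (t1 t2 : n.-tuple Sigma) :
  periodic Sigma n (splice n (cycle_word t1) (cycle_word t2)) -> t1 = t2.
Proof.
move=> per; apply: eq_from_tnth => j; have := per (n + j).
rewrite modnDl modn_small // splice_ge ?leq_addr // splice_lt //.
by rewrite cycle_word_addn !cycle_word_tnth => ->.
Qed.

Variables (A : npa Sigma).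
Hypothesis precise_A : lasso_precise Sigma n (periodic Sigma n) A.

Lemma lang_cycle_word t : lang A (cycle_word t).
Proof. by case: precise_A => _ Ln_eq; case/Ln_eq: (cycle_word_lasso t). Qed.

Definition accepting_run t : nat -> state A :=
  proj1_sig (constructive_indefinite_description _ (lang_cycle_word t)).

Lemma accepting_runP t :
  is_run A (cycle_word t) (accepting_run t) /\ accepting A (accepting_run t).
Proof. exact: proj2_sig (constructive_indefinite_description _ (lang_cycle_word t)). Qed.

Definition state_after_cycle t : state A := accepting_run t n.

Lemma state_after_cycle_inj : injective state_after_cycle.
Proof.
move=> t1 t2 same_state; apply: periodic_splice_cycle_word.
case: precise_A => sound _; apply: sound.
have [run1 _] := accepting_runP t1; have [run2 acc2] := accepting_runP t2.
exact: lang_splice run1 run2 acc2 same_state.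
Qed.

End CycleWords.

Theorem theorem2 (Sigma : finType) :
  exists phi : nat -> property Sigma,
    forall n : nat, 0 < n ->
      forall A : npa Sigma, lasso_precise Sigma n (phi n) A ->
        #|Sigma| ^ n <= #|state A|.
Proof.
exists (periodic Sigma) => [[|m]] // _ A precise_A.
rewrite -card_tuple; exact: leq_card (@state_after_cycle_inj _ _ _ precise_A).
Qed.
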